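(* Let $F$ be a Ferrers diagram of semiperimeter $n+1$, $T\in\mathsf{EWtab}(F)$ and $S=S(T)$ its supplementary tableau, with $\mathsf{CanonTop}(T)=(U^{(0)}_T,V^{(1)}_T,U^{(1)}_T,V^{(2)}_T,\ldots)$. (a) If $j\in U^{(\ell)}_T$ and $k\in\mathsf{cols}(F)$ with $j<k$, then $k\in V^{(\ell)}_T$ if and only if $S_{jk}=0$ and this $0$ is not a cornersupport entry. (b) If $j\in V^{(\ell)}_T$ and $k\in\mathsf{rows}(F)$ with $k<j$, then $k\in U^{(\ell-1)}_T$ if and only if $S_{kj}=1$ and this $1$ is not a cornersupport entry.
   Context: Ferrers diagrams and graphs: a Ferrers diagram $F$ (English convention) of semiperimeter $n+1$ has rows and columns labeled by $0,\ldots,n$: the $n+1$ unit steps of its south-east boundary path, traversed from top-right to bottom-left, are labeled $0,\ldots,n$; a vertical step labels the row it bounds, a horizontal step the column it bounds (top row labeled $0$). $\mathsf{rows}(F)$, $\mathsf{cols}(F)$ are the label sets; $F$ has a cell in row $i$, column $j$ iff $i<j$. $G(F)$ has vertex set $\{0,\ldots,n\}$ with edges $\{i,j\}$ for $i\in\mathsf{rows}(F)$, $j\in\mathsf{cols}(F)$, $i<j$. Sandpile model on $G(F)$ with sink $0$: configurations $c\in\mathbb{N}^n$; non-sink $v$ unstable if $c_v\ge\deg(v)$; toppling sends one grain to each neighbour (grains to $0$ disappear); toppling the sink adds one grain to each neighbour of $0$. Recurrent: stable configurations obtainable from $c_v=\deg(v)-1$ by adding grains and stabilizing; $\mathsf{Rec}^{\mathsf{min}}$: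 recurrent configurations of minimal total grain count. Canonical toppling of a recurrent $c$: topple the sink ($U^{(0)}_c=\{0\}$), then alternately topple simultaneously all unstable vertices in $\mathsf{cols}(F)$ ($V^{(1)}_c$), all unstable in $\mathsf{rows}(F)$ ($U^{(1)}_c$), etc.; $\mathsf{CanonTop}(c)=(U^{(0)}_c,V^{(1)}_c,U^{(1)}_c,\ldots)$ is an ordered partition of $\{0,\ldots,n\}$. EW-tableaux: a $0/1$-filling $T$ of $F$ ($T_{ij}$ = entry in row $i$, column $j$) such that the top row is all 1s, every other row contains a 0, and no rectangle has 0s in two diagonally opposite corners and 1s in the other two; $\mathsf{EWtab}(F)$ is their set. $\phi_{TC}(T)$ is the configuration with $c_i$ = number of 1s in row $i$ ($i\in\mathsf{rows}(F)$) and $c_i$ = number of 0s in column $i$ ($i\in\mathsf{cols}(F)$); it is a minimal recurrent configuration. Set $\mathsf{CanonTop}(T):=\mathsf{CanonTop}(\phi_{TC}(T))$, with blocks $U^{(i)}_T,V^{(i)}_T$. Supplementary tableau: $S=S(T)$ is the rectangular $|\mathsf{rows}(F)|\times|\mathsf{cols}(F)|$ array with $S_{ij}=1$ if $i\in\mathsf{rows}(F)$ appears in an earlier block of $\mathsf{CanonTop}(T)$ than $j\in\mathsf{cols}(F)$, and $S_{ij}=0$ otherwise; it agrees with $T$ on the cells of $F$. Cornersupport: an entry $x\in\{0,1\}$ at position $(j,k)$ ($j$ a row, $k$ a column) is a cornersupport entry iff there exist a row $j'\ne j$ and a column $k'\ne k$ with $S_{j'k'}\ne x$ and $S_{j'k}=S_{jk'}=x$;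 one then says $S_{j'k'}$ induces $(j,k)$ to be a cornersupport. *)

From mathcomp Require Import all_boot.
Set Implicit Arguments. Unset Strict Implicit. Unset Printing Implicit Defensive.

(* A Ferrers diagram of semiperimeter n+1 is encoded by its boundary path:
   step i (0 <= i <= n) is vertical (labels a row) iff [isrow i] is true,
   otherwise horizontal (labels a column).  Values of [isrow] beyond n are
   irrelevant. *)
Section Ferrers.
Variables (n : nat) (isrow : nat -> bool).

Definition rowF (i : nat) : bool := (i <= n) && isrow i.
Definition colF (j : nat) : bool := (j <= n) && ~~ isrow j.

(* The top row is labelled 0, and the last step (bottom-left) is horizontal,
   so that every row and every column is nonempty. *)
Definition ferrers : bool := [&& 0 < n, isrow 0 & ~~ isrow n].

Definition cell (i j : nat) : bool := [&& rowF i, colF j & i < j].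

Definition adj (u v : nat) : bool := cell u v || cell v u.
Definition deg (v : nat) : nat := count (adj v) (iota 0 n.+1).

(* EW-tableaux: T i j is the entry in row i, column j (only cells matter). *)
Definition is_EWtab (T : nat -> nat -> bool) : Prop :=
  (forall j, cell 0 j -> T 0 j = true) /\
  (forall i, rowF i -> i <> 0 -> exists j, cell i j /\ T i j = false) /\
  (forall i i' j j', cell i j -> cell i j' -> cell i' j -> cell i' j' ->
      ~ [/\ T i j = false, T i' j' = false, T i j' = true & T i' j = true]).

(* The configuration phi_TC(T) (values at non-sink vertices 1..n are used). *)
Definition phiTC (T : nat -> nat -> bool) (v : nat) : nat :=
  if isrow v then count (fun j => cell v j && T v j) (iota 0 n.+1)
  else count (fun i => cell i v && ~~ T i v) (iota 0 n.+1).

(* Toppling simultaneously all vertices of the list A (grains sent to the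
   sink disappear; the value at the sink 0 is never used). *)
Definition topple (c : nat -> nat) (A : seq nat) (v : nat) : nat :=
  c v - (v \in A) * deg v + count (fun u => (u \in A) && adj u v) (iota 0 n.+1).

(* Vertices toppled at step t >= 1 of the canonical toppling, from
   configuration c: unstable non-sink columns (t odd) / rows (t even). *)
Definition unstable_block (t : nat) (c : nat -> nat) : seq nat :=
  [seq v <- iota 1 n | (if odd t then colF v else rowF v) && (deg v <= c v)].

Fixpoint canon_state (c : nat -> nat) (t : nat) : nat -> nat :=
  match t with
  | 0 => topple c [:: 0]
  | t'.+1 => let s := canon_state c t' in topple s (unstable_block t'.+1 s)
  end.

(* The t-th block of CanonTop(c): (U0, V1, U1, V2, U2, ...) = blocks 0,1,2,3,4,... *)
Definition canon_block (c : nat -> nat) (t : nat) : seq nat :=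
  match t with
  | 0 => [:: 0]
  | t'.+1 => unstable_block t'.+1 (canon_state c t')
  end.

Definition inU (T : nat -> nat -> bool) (l v : nat) : Prop :=
  v \in canon_block (phiTC T) l.*2.
Definition inV (T : nat -> nat -> bool) (l v : nat) : Prop :=
  match l with 0 => False | l'.+1 => v \in canon_block (phiTC T) l'.*2.+1 end.

Definition Supp (T : nat -> nat -> bool) (i j : nat) : Prop :=
  exists t t', [/\ t < t', i \in canon_block (phiTC T) t &
                          j \in canon_block (phiTC T) t'].

Definition Sval (T : nat -> nat -> bool) (i j : nat) (x : bool) : Prop :=
  if x then Supp T i j else ~ Supp T i j.

Definition cornersupport (T : nat -> nat -> bool) (j k : nat) (x : bool) : Prop :=
  exists j' k', [/\ rowF j', colF k', j' <> j, k' <> k &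
    [/\ Sval T j' k' (~~ x), Sval T j' k x & Sval T j k' x]].

End Ferrers.

From Pilot Require Import Defs.
From mathcomp Require Import all_boot zify.
Set Implicit Arguments. Unset Strict Implicit. Unset Printing Implicit Defensive.

(* The configuration phi_TC(T) is stable, and since toppling [v] removes
   [deg v] grains from it while each toppling of a neighbour brings one back,
   no vertex topples twice in the canonical toppling.  Every vertex does
   topple: otherwise, by Dhar's criterion, the untoppled vertices would form
   a set in which each vertex has more neighbours than grains.  For
   phi_TC(T) this means that every row of the set has a 0, and every column
   a 1, in a cell whose other index is also in the set; the rectangle
   condition forbids this (peel off the 0s of the topmost row and induct).
   So every vertex [v] has a level, the index of its block: rows have even
   and columns odd levels, every level below an occupied one is occupied,
   and S_ij = 1 iff level i < level j.
   Both statements then become parity arithmetic on levels, a cornersupport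
   witness being a row and a column on consecutive levels strictly between
   those of [j] and [k]. *)

Section Count.
Variable T : Type.
Implicit Types (a b : pred T) (s : seq T).

Lemma sub_count_ltn a b s : subpred a b -> has (predD b a) s -> count a s < count b s.
Proof.
move=> sab; elim: s => //= x s IH.
case ax: (a x); first by rewrite (sab _ ax) /= ltn_add2l.
case: (b x) => /=; last exact: IH.
by move=> _; rewrite ltnS; apply: sub_count.
Qed.

Lemma has_predD_count_ltn a b s : count a s < count b s -> has (predD b a) s.
Proof.
elim: s => //= x s IH; case: (a x); case: (b x) => //=; rewrite ?ltn_add2l //.
by rewrite add0n => lt; apply: IH; lia.
Qed.

Lemma count_predI_predC a b s :
  count (predI a b) s + count (predI a (predC b)) s = count a s.
Proof. by elim: s => //= x s <-; case: (a x); case: (b x) => /=; lia. Qed.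

Lemma count_predU_disjoint a b s : (forall x, ~~ (a x && b x)) ->
  count (predU a b) s = count a s + count b s.
Proof.
move=> ab; rewrite -count_predUI (@eq_count _ (predI a b) pred0) ?count_pred0 ?addn0 //.
by move=> x /=; apply/negbTE.
Qed.

End Count.

Section Ferrers.
Variables (n : nat) (isrow : nat -> bool).

Local Notation rowF := (rowF n isrow).
Local Notation colF := (colF n isrow).
Local Notation cell := (cell n isrow).
Local Notation adj := (adj n isrow).
Local Notation vertices := (iota 0 n.+1).

Lemma mem_vertices v : (v \in vertices) = (v <= n).
Proof. by rewrite mem_iota add0n ltnS. Qed.

Lemma rowF_le v : rowF v -> v <= n. Proof. by case/andP. Qed.
Lemma colF_le v : colF v -> v <= n. Proof. by case/andP. Qed.

Lemma rowF_colF v : rowF v -> colF v = false.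
Proof. by rewrite /Defs.rowF /Defs.colF => /andP[_ ->]; rewrite andbF. Qed.

Lemma rowF_or_colF v : v <= n -> rowF v || colF v.
Proof. by rewrite /Defs.rowF /Defs.colF => ->; case: (isrow v). Qed.

Lemma cell_rowF i j : cell i j -> rowF i. Proof. by case/and3P. Qed.
Lemma cell_colF i j : cell i j -> colF j. Proof. by case/and3P. Qed.
Lemma cell_ltn i j : cell i j -> i < j. Proof. by case/and3P. Qed.

Lemma adjC u v : adj u v = adj v u. Proof. by rewrite /Defs.adj orbC. Qed.

Lemma adj_rowF v u : rowF v -> adj v u = cell v u.
Proof.
move=> rv; rewrite /Defs.adj; case cuv: (cell u v); last by rewrite orbF.
by move: (cell_colF cuv); rewrite (rowF_colF rv).
Qed.

Lemma adj_colF v u : colF v -> adj v u = cell u v.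
Proof.
move=> cv; rewrite /Defs.adj; case cvu: (cell v u) => //.
by move: cv; rewrite (rowF_colF (cell_rowF cvu)).
Qed.

Lemma rowF_adj u v : rowF u -> rowF v -> adj u v = false.
Proof. by move=> ru rv; rewrite adj_rowF //; apply/negP => /cell_colF; rewrite rowF_colF. Qed.

Lemma colF_adj u v : colF u -> colF v -> adj u v = false.
Proof.
move=> cu cv; rewrite adj_colF //; apply/negP => /cell_rowF rv.
by move: cv; rewrite (rowF_colF rv).
Qed.

Hypothesis ferrersF : ferrers n isrow.

Lemma rowF0 : rowF 0.
Proof. by case/and3P: ferrersF => _ r0 _; rewrite /Defs.rowF r0. Qed.

End Ferrers.

Section CanonicalToppling.
Variables (n : nat) (isrow : nat -> bool) (c : nat -> nat).
Hypothesis ferrersF : ferrers n isrow.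
Hypothesis c_stable : forall v, 0 < v <= n -> c v < deg n isrow v.

Local Notation rowF := (rowF n isrow).
Local Notation colF := (colF n isrow).
Local Notation adj := (adj n isrow).
Local Notation deg := (deg n isrow).
Local Notation vertices := (iota 0 n.+1).
Local Notation B := (canon_block n isrow c).
Local Notation s := (canon_state n isrow c).

Definition toppled t u := has (fun t' => u \in B t') (iota 0 t.+1).

Definition toppled_nbrs t v := count (fun u => toppled t u && adj u v) vertices.

Lemma mem_canon_blockS t v : (v \in B t.+1) =
  [&& 0 < v <= n, (if odd t.+1 then colF v else rowF v) & deg v <= s t v].
Proof. by rewrite mem_filter mem_iota add1n ltnS andbC. Qed.

Lemma canon_block_le t v : v \in B t -> v <= n.
Proof.
case: t => [|t]; first by rewrite inE => /eqP ->.
by rewrite mem_canon_blockS => /and3P[/andP[]].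
Qed.

Lemma canon_block_type t v : v \in B t -> if odd t then colF v else rowF v.
Proof.
case: t => [|t]; first by rewrite inE => /eqP ->; apply: rowF0.
by rewrite mem_canon_blockS => /and3P[].
Qed.

Lemma canon_block_adj t1 t2 u v :
  u \in B t1 -> v \in B t2 -> odd t1 = odd t2 -> adj u v = false.
Proof.
move=> /canon_block_type + /canon_block_type + e; rewrite e.
by case: (odd t2) => [/colF_adj|/rowF_adj]; apply.
Qed.

Lemma canon_state_idle t v : v \notin B t.+1 ->
  (forall u, u \in B t.+1 -> adj u v = false) -> s t.+1 v = s t v.
Proof.
move=> /negbTE vB nadj; rewrite /= /topple vB mul0n subn0.
rewrite (eq_count (a2 := pred0)) ?count_pred0 ?addn0 // => u /=.
by apply/negbTE/andP => -[/nadj ->].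
Qed.

Lemma toppledS t u : toppled t.+1 u = toppled t u || (u \in B t.+1).
Proof. by rewrite /toppled -addn1 iotaD has_cat /= orbF. Qed.

Lemma toppled0 u : toppled 0 u = (u == 0).
Proof. by rewrite /toppled /= orbF inE. Qed.

Lemma toppled_sink t : toppled t 0.
Proof. by elim: t => [|t IH]; rewrite ?toppled0 // toppledS IH. Qed.

Lemma toppled_nbrs_le t v : toppled_nbrs t v <= deg v.
Proof. by apply: sub_count => u /andP[_]; rewrite adjC. Qed.

Lemma balance_toppled_stable t v : 0 < v <= n -> toppled t v ->
  s t v + toppled t v * deg v = c v + toppled_nbrs t v -> s t v < deg v.
Proof.
move=> v_in ->; rewrite mul1n.
have := toppled_nbrs_le t v; have := c_stable v_in; lia.
Qed.

(* Each toppling of [v] costs [deg v] grains and each toppling of a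
   neighbour brings one. *)
Lemma canon_state_balance t v : 0 < v <= n ->
  s t v + toppled t v * deg v = c v + toppled_nbrs t v.
Proof.
elim: t v => [|t IH] v v_in.
  case/andP: v_in => v0 _; rewrite /= /topple /toppled_nbrs toppled0.
  rewrite inE gtn_eqF //= mul0n subn0 !addn0; congr (_ + (_ + _)).
  by apply: eq_count => u /=; rewrite toppled0 inE.
have fresh u : u \in B t.+1 -> ~~ toppled t u.
  move=> uB; move: (uB); rewrite mem_canon_blockS => /and3P[u_in _].
  by rewrite leqNgt; apply: contra => tu; apply: balance_toppled_stable tu (IH u u_in).
have -> : toppled_nbrs t.+1 v =
    toppled_nbrs t v + count (fun u => (u \in B t.+1) && adj u v) vertices.
  rewrite /toppled_nbrs -count_predU_disjoint.
    by apply: eq_count => u; rewrite /= toppledS andb_orl.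
  by move=> u; apply/negP => /andP[/andP[tu _] /andP[/fresh]]; rewrite tu.
have -> : s t.+1 v = s t v - (v \in B t.+1) * deg v +
    count (fun u => (u \in B t.+1) && adj u v) vertices by [].
rewrite toppledS; have := IH v v_in; case vB: (v \in B t.+1).
  move: (vB); rewrite mem_canon_blockS => /and3P[_ _ unstable].
  rewrite (negbTE (fresh v vB)) /=; lia.
by rewrite orbF mul0n subn0; lia.
Qed.

Lemma canon_block_fresh t v : v \in B t.+1 -> ~~ toppled t v.
Proof.
move=> vB; move: (vB); rewrite mem_canon_blockS => /and3P[v_in _].
rewrite leqNgt; apply: contra => tv.
exact: balance_toppled_stable tv (canon_state_balance t v_in).
Qed.

Lemma canon_block_uniq t1 t2 v : v \in B t1 -> v \in B t2 -> t1 = t2.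
Proof.
wlog lt12 : t1 t2 / t1 < t2.
  move=> W v1 v2; case: (ltngtP t1 t2) => // lt; first exact: W.
  by apply/esym/W.
case: t2 lt12 => // t2 lt12 v1 /canon_block_fresh/hasP[]; exists t1 => //.
by rewrite mem_iota.
Qed.

(* If block [t] were empty, the state would not change at step [t], so a
   vertex of block [t+1], which has the type of block [t-1] and none of whose
   neighbours topple in block [t-1], would already have been unstable when
   block [t-1] was formed (for [t = 1]: in [c] itself). *)
Lemma canon_block_pred t v : v \in B t.+1 -> B t != [::].
Proof.
case: t => [|t] vB; first by [].
apply/eqP => Bt; have idle : s t.+1 v = s t v.
  by apply: canon_state_idle => [|u]; rewrite Bt.
move: (vB); rewrite mem_canon_blockS idle => /and3P[v_in vtype].
apply/negP; rewrite -ltnNge; case: t vB Bt idle vtype => [|t] vB Bt idle vtype.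
  rewrite /= /topple inE gtn_eqF ?mul0n ?subn0; last by case/andP: v_in.
  rewrite (eq_count (a2 := pred0)) ?count_pred0 ?addn0; first exact: c_stable.
  by move=> u /=; rewrite inE; case: eqP => //= ->; apply: rowF_adj (rowF0 _) vtype.
have vB1 : v \notin B t.+1.
  by apply/negP => vB1; have := canon_block_uniq vB1 vB; lia.
rewrite canon_state_idle //; last first.
  by move=> u uB; apply: canon_block_adj uB vB _; rewrite /= negbK.
by move: vtype vB1; rewrite mem_canon_blockS v_in /= !negbK => -> /=; rewrite -ltnNge.
Qed.

Lemma toppled_count t : B t != [::] -> t < count (toppled t) vertices.
Proof.
elim: t => [|t IH] Bt; first by rewrite -has_count; apply/hasP; exists 0.
case E: (B t.+1) Bt => [//|u l] _; have uB : u \in B t.+1 by rewrite E mem_head.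
have grows : count (toppled t) vertices < count (toppled t.+1) vertices.
  apply: sub_count_ltn => [x|]; first by rewrite toppledS => ->.
  apply/hasP; exists u; first by rewrite mem_vertices (canon_block_le uB).
  by rewrite /= toppledS uB orbT canon_block_fresh.
exact: leq_trans (IH (canon_block_pred uB)) grows.
Qed.

Lemma canon_block_halt t : n < t -> B t = [::].
Proof.
move=> nt; case E: (B t) => [//|u l]; have := toppled_count (t := t).
by rewrite E => /(_ isT); have := count_size (toppled t) vertices; rewrite size_iota; lia.
Qed.

(* By [canon_block_halt] nothing is unstable after [n] steps; the balance
   equation does the rest. *)
Lemma untoppled_nbrs v : v <= n -> ~~ toppled n v ->
  c v < count (fun u => ~~ toppled n u && adj u v) vertices.
Proof.
move=> vn ntv; have v_in : 0 < v <= n.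
  by rewrite vn andbT lt0n; apply: contraNneq ntv => ->; apply: toppled_sink.
have stable : s n v < deg v.
  rewrite ltnNge; apply/negP => unstable.
  have /orP[vtype|vtype] : (if odd n.+1 then colF v else rowF v) ||
                           (if odd n.+2 then colF v else rowF v).
    by rewrite /= negbK; case: (odd n); rewrite /= ?(orbC (colF v)) rowF_or_colF.
  - have : v \in B n.+1 by rewrite mem_canon_blockS v_in vtype.
    by rewrite canon_block_halt.
  - have idle : s n.+1 v = s n v.
      by apply: canon_state_idle => [|u]; rewrite canon_block_halt.
    have : v \in B n.+2 by rewrite mem_canon_blockS v_in vtype idle.
    by rewrite canon_block_halt.
have deg_split : deg v =
    toppled_nbrs n v + count (fun u => ~~ toppled n u && adj u v) vertices.
  rewrite /Defs.deg -(count_predI_predC (adj v) (toppled n)).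
  by congr (_ + _); apply: eq_count => u /=; rewrite adjC andbC.
have := canon_state_balance n v_in; rewrite (negbTE ntv) mul0n addn0; lia.
Qed.

Definition forbidden_set (P : pred nat) : Prop :=
  (forall v, P v -> v <= n) /\
  (forall v, P v -> c v < count (fun u => P u && adj u v) vertices).

Lemma canon_toppling_exhaustive :
  (forall P, forbidden_set P -> forall v, ~~ P v) -> forall v, v <= n -> toppled n v.
Proof.
move=> no_forbidden v vn; apply/negPn/negP => ntv.
pose P u := (u <= n) && ~~ toppled n u.
suff /no_forbidden/(_ v) : forbidden_set P by rewrite /P vn ntv.
split=> [u /andP[] // | u /andP[un ntu]].
rewrite (eq_in_count (a2 := fun w => ~~ toppled n w && adj w u)).
  exact: untoppled_nbrs.
by move=> w; rewrite mem_vertices /P => ->.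
Qed.

Section Levels.
Hypothesis exhaustive : forall v, v <= n -> toppled n v.

Definition level v := find (fun t => v \in B t) (iota 0 n.+1).

Lemma mem_canon_block_level v : v <= n -> v \in B (level v).
Proof.
move=> /exhaustive tv; have := nth_find 0 tv; rewrite nth_iota //.
by move: tv; rewrite /toppled has_find size_iota.
Qed.

Lemma level_eq t v : v \in B t -> level v = t.
Proof.
move=> vB; apply: (canon_block_uniq _ vB).
exact/mem_canon_block_level/(canon_block_le vB).
Qed.

Lemma odd_level v : v <= n -> odd (level v) = colF v.
Proof.
move=> /mem_canon_block_level/canon_block_type.
by case: (odd _) => // /rowF_colF ->.
Qed.

Lemma level_down_closed v t : v <= n -> t <= level v ->
  exists2 u, u <= n & level u = t.
Proof.
move=> /mem_canon_block_level; move: (level v) => m; elim: m v => [|m IH] v vm.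
  by rewrite leqn0 => /eqP ->; exists 0; rewrite // (@level_eq 0).
rewrite leq_eqVlt ltnS => /orP[/eqP -> | ].
  by exists v; [exact: canon_block_le vm | exact: level_eq].
case E: (B m) (canon_block_pred vm) => [//|u l] _.
by apply: (IH u); rewrite E mem_head.
Qed.

End Levels.

End CanonicalToppling.

Section EWtableau.
Variables (n : nat) (isrow : nat -> bool) (T : nat -> nat -> bool).

Local Notation rowF := (rowF n isrow).
Local Notation colF := (colF n isrow).
Local Notation cell := (cell n isrow).
Local Notation deg := (deg n isrow).
Local Notation vertices := (iota 0 n.+1).

(* Orienting each cell from its row to its column when it holds a 0, and from
   its column to its row when it holds a 1, a closed set is one in which every
   vertex has an out-neighbour. *)
Definition alternating_closed (P : pred nat) : Prop :=
  [/\ forall v, P v -> v <= n,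
      forall r, P r -> rowF r -> exists2 k, P k & cell r k && ~~ T r k &
      forall k, P k -> colF k -> exists2 r, P r & cell r k && T r k].

Section RectangleFree.
Hypothesis T_rect : forall i i' j j', cell i j -> cell i j' -> cell i' j -> cell i' j' ->
  ~ [/\ T i j = false, T i' j' = false, T i j' = true & T i' j = true].

(* The zeros of the topmost row [r0] of [P], together with the other rows of
   [P] meeting them, form a smaller closed set. *)
Lemma alternating_closed_shrink P r0 : alternating_closed P -> P r0 -> rowF r0 ->
  (forall r, P r -> rowF r -> r0 <= r) ->
  exists P', [/\ alternating_closed P', exists v, P' v &
    count (predI P' rowF) vertices < count (predI P rowF) vertices].
Proof.
case=> Pn Prow Pcol Pr0 r0row r0min.
pose Z k := [&& P k, cell r0 k & ~~ T r0 k].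
pose R r := [&& P r, rowF r, r != r0 & has (fun k => Z k && cell r k) vertices].
have ZRP u : predU Z R u -> P u by case/orP => [/and3P[] | /and4P[]].
have [k0 Pk0 /andP[ck0 Tk0]] := Prow r0 Pr0 r0row.
exists (predU Z R); split; last first.
- apply: sub_count_ltn => [u /andP[/ZRP Pu ru] | ]; first exact/andP.
  apply/hasP.
  exists r0; first by rewrite mem_vertices (rowF_le r0row).
  by rewrite /= /Z /R eqxx Pr0 r0row /Defs.cell ltnn !andbF.
- by exists k0; rewrite /= /Z Pk0 ck0 Tk0.
split=> [u /ZRP /Pn // | r ZRr rrow | k ZRk kcol].
- have {ZRr} /and4P[Pr _ _ /hasP[k' _ /andP[/and3P[Pk' ck' Tk'] crk']]] : R r.
    by case/orP: ZRr => // /and3P[_ /cell_colF]; rewrite (rowF_colF rrow).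
  have [k Pk /andP[crk Trk]] := Prow r Pr rrow.
  have cr0k : cell r0 k.
    by rewrite /Defs.cell r0row (cell_colF crk) (leq_ltn_trans (r0min r Pr rrow) (cell_ltn crk)).
  case Tr0k: (T r0 k); last by exists k; [rewrite /= /Z Pk cr0k Tr0k | rewrite crk].
  exists k'; first by rewrite /= /Z Pk' ck' Tk'.
  rewrite crk' /=; apply/negP => Trk'; apply: (T_rect ck' cr0k crk' crk).
  by split; rewrite ?Tr0k ?Trk' //; apply: negbTE.
- have {ZRk} /and3P[Pk cr0k Tr0k] : Z k.
    by case/orP: ZRk => // /and4P[_ /rowF_colF]; rewrite kcol.
  have [r Pr /andP[crk Trk]] := Pcol k Pk kcol.
  exists r; last by rewrite crk.
  apply/orP; right; apply/and4P; split => //; first exact: cell_rowF crk.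
    by apply: contraNneq Tr0k => <-.
  apply/hasP; exists k; first by rewrite mem_vertices (colF_le kcol).
  by rewrite /Z Pk cr0k Tr0k crk.
Qed.

Lemma alternating_closed_empty P : alternating_closed P -> forall v, ~~ P v.
Proof.
move: P; suff IH m P : count (predI P rowF) vertices < m ->
    alternating_closed P -> forall v, ~~ P v by move=> P; apply: IH.
elim: m P => [//|m IH] P Pm closedP v; apply/negP => Pv.
have [Pn _ Pcol] := closedP.
have has_row : exists r, P r && rowF r.
  case/orP: (rowF_or_colF isrow (Pn v Pv)) => [vrow|vcol]; first by exists v; rewrite Pv.
  by have [r Pr /andP[/cell_rowF rrow _]] := Pcol v Pv vcol; exists r; rewrite Pr.
case: (ex_minnP has_row) => r0 /andP[Pr0 r0row] r0min.
have [|P' [closedP' [u P'u] lt]] := alternating_closed_shrink closedP Pr0 r0row.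
  by move=> r Pr rrow; apply: r0min; rewrite Pr.
by apply/negP: P'u; apply: IH closedP' u; apply: leq_trans lt _.
Qed.

End RectangleFree.

Hypothesis ferrersF : ferrers n isrow.
Hypothesis EW : is_EWtab n isrow T.

Lemma phiTC_stable v : 0 < v <= n -> phiTC n isrow T v < deg v.
Proof.
case: EW => top_ones [row_zero _] /andP[v0 vn].
case/orP: (rowF_or_colF isrow vn) => [vrow|vcol]; rewrite /phiTC /Defs.deg.
- have /andP[_ ->] := vrow; apply: sub_count_ltn => [j /andP[cvj _]|].
    by rewrite adj_rowF.
  have [|j [cvj Tvj]] := row_zero v vrow; first by apply/eqP; rewrite -lt0n.
  apply/hasP; exists j; first by rewrite mem_vertices (colF_le (cell_colF cvj)).
  by rewrite /= Tvj cvj adj_rowF.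
- have /andP[_ /negbTE ->] := vcol; apply: sub_count_ltn => [i /andP[civ _]|].
    by rewrite adj_colF.
  have c0v : cell 0 v by rewrite /Defs.cell rowF0 // vcol.
  apply/hasP; exists 0; first by rewrite mem_vertices.
  by rewrite /= top_ones // c0v adj_colF.
Qed.

Lemma phiTC_no_forbidden P : forbidden_set n isrow (phiTC n isrow T) P -> forall v, ~~ P v.
Proof.
case: EW => _ [_ T_rect] [Pn Plt]; apply: alternating_closed_empty => //.
split=> // [r Pr rrow | k Pk kcol].
- have := Plt r Pr; have /andP[_ isrow_r] := rrow; rewrite /phiTC isrow_r.
  move=> /has_predD_count_ltn/hasP[k _ /=]; rewrite adjC adj_rowF //.
  by move=> /and3P[+ Pk crk]; rewrite crk /= => nTrk; exists k; rewrite ?crk.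
- have := Plt k Pk; have /andP[_ /negbTE isrow_k] := kcol; rewrite /phiTC isrow_k.
  move=> /has_predD_count_ltn/hasP[r _ /=]; rewrite adjC adj_colF //.
  by move=> /and3P[+ Pr crk]; rewrite crk /= negbK => Trk; exists r; rewrite ?crk.
Qed.

End EWtableau.

Section SupplementaryTableau.
Variables (n : nat) (isrow : nat -> bool) (T : nat -> nat -> bool).
Hypothesis ferrersF : ferrers n isrow.
Hypothesis EW : is_EWtab n isrow T.

Local Notation rowF := (rowF n isrow).
Local Notation colF := (colF n isrow).
Local Notation c := (phiTC n isrow T).
Local Notation lvl := (level n isrow c).

Let c_stable := phiTC_stable ferrersF EW.
Let exhaustive := canon_toppling_exhaustive ferrersF c_stable (phiTC_no_forbidden EW).

Lemma lvl_rowF v : rowF v -> exists p, lvl v = p.*2.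
Proof.
move=> vrow; exists (lvl v)./2; rewrite -[LHS]odd_double_half.
by rewrite (odd_level ferrersF exhaustive) ?(rowF_le vrow) // (rowF_colF vrow).
Qed.

Lemma lvl_colF v : colF v -> exists q, lvl v = q.*2.+1.
Proof.
move=> vcol; exists (lvl v)./2; rewrite -[LHS]odd_double_half.
by rewrite (odd_level ferrersF exhaustive) ?(colF_le vcol) // vcol.
Qed.

Lemma rowF_at_level v p : v <= n -> p.*2 <= lvl v -> exists2 u, rowF u & lvl u = p.*2.
Proof.
move=> vn /(level_down_closed ferrersF c_stable exhaustive vn)[u un ul].
exists u => //; have := odd_level ferrersF exhaustive un.
by rewrite ul odd_double => /esym/negbT; case/orP: (rowF_or_colF isrow un) => // ->.
Qed.

Lemma colF_at_level v q : v <= n -> q.*2.+1 <= lvl v -> exists2 u, colF u & lvl u = q.*2.+1.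
Proof.
move=> vn /(level_down_closed ferrersF c_stable exhaustive vn)[u un ul].
exists u => //; have := odd_level ferrersF exhaustive un.
by rewrite ul /= odd_double => <-.
Qed.

Lemma Sval_level i j x : rowF i -> colF j -> Sval n isrow T i j x <-> (lvl i < lvl j) = x.
Proof.
move=> irow jcol; have lvl_eq := level_eq ferrersF c_stable exhaustive.
have mem_lvl := mem_canon_block_level exhaustive.
have SuppP : Supp n isrow T i j <-> lvl i < lvl j.
  split=> [[t [t' [lt it jt']]] | lt]; first by rewrite (lvl_eq _ _ it) (lvl_eq _ _ jt').
  by exists (lvl i), (lvl j); rewrite lt !mem_lvl ?(rowF_le irow) ?(colF_le jcol).
by case: x => /=; rewrite SuppP; [|case: ltnP]; split=> // /negP.
Qed.

Lemma inU_level l v : inU n isrow T l v <-> rowF v /\ lvl v = l.*2.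
Proof.
rewrite /inU; split=> [vB | [vrow <-]]; last exact: mem_canon_block_level (rowF_le vrow).
have := canon_block_type ferrersF vB; rewrite odd_double => vrow.
split=> //; exact: (level_eq ferrersF c_stable exhaustive vB).
Qed.

Lemma inV_level l v : inV n isrow T l.+1 v <-> colF v /\ lvl v = l.*2.+1.
Proof.
rewrite /inV; split=> [vB | [vcol <-]]; last exact: mem_canon_block_level (colF_le vcol).
have := canon_block_type ferrersF vB; rewrite /= odd_double => vcol.
split=> //; exact: (level_eq ferrersF c_stable exhaustive vB).
Qed.

Lemma inV_iff_zero_not_cornersupport l j k : inU n isrow T l j -> colF k ->
  inV n isrow T l k <->
  Sval n isrow T j k false /\ ~ cornersupport n isrow T j k false.
Proof.
move=> /inU_level[jrow jl] kcol; have [m km] := lvl_colF kcol.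
split.
- case: l jl => [|l] jl; first by case.
  case/inV_level => _ kl; split; first by apply/Sval_level => //; rewrite jl kl; lia.
  case=> j' [k' [j'row k'col _ _ []]].
  move=> /(Sval_level _ j'row k'col) + /(Sval_level _ j'row kcol) + /(Sval_level _ jrow k'col).
  have [p ->] := lvl_rowF j'row; have [q ->] := lvl_colF k'col; rewrite jl kl; lia.
- case=> /(Sval_level _ jrow kcol); rewrite jl km => mlt no_cs.
  have [<-|lt] : m.+1 = l \/ m.+1 < l by lia.
    by apply/inV_level.
  have [|j' j'row j'l] := @rowF_at_level _ m.+1 (rowF_le jrow); first by rewrite jl; lia.
  have [|k' k'col k'l] := @colF_at_level _ m.+1 (rowF_le jrow); first by rewrite jl; lia.
  case: no_cs; exists j', k'; split=> //.
  + by move=> e; move: j'l; rewrite e jl; lia.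
  + by move=> e; move: k'l; rewrite e km; lia.
  + by split; apply/Sval_level => //; rewrite ?j'l ?k'l ?km ?jl; lia.
Qed.

Lemma inU_iff_one_not_cornersupport l j k : inV n isrow T l j -> rowF k ->
  inU n isrow T l.-1 k <->
  Sval n isrow T k j true /\ ~ cornersupport n isrow T k j true.
Proof.
case: l => [|l]; first by case.
move=> /inV_level[jcol jl] krow; have [a ka] := lvl_rowF krow.
split.
- case/inU_level => _ kl; split; first by apply/Sval_level => //; rewrite jl kl; lia.
  case=> j' [k' [j'row k'col _ _ []]].
  move=> /(Sval_level _ j'row k'col) + /(Sval_level _ j'row jcol) + /(Sval_level _ krow k'col).
  have [p ->] := lvl_rowF j'row; have [q ->] := lvl_colF k'col; rewrite jl kl; lia.
- case=> /(Sval_level _ krow jcol); rewrite jl ka => alt no_cs.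
  have [<-|lt] : a = l \/ a < l by lia.
    by apply/inU_level.
  have [|j' j'row j'l] := @rowF_at_level _ a.+1 (colF_le jcol); first by rewrite jl; lia.
  have [|k' k'col k'l] := @colF_at_level _ a (colF_le jcol); first by rewrite jl; lia.
  case: no_cs; exists j', k'; split=> //.
  + by move=> e; move: j'l; rewrite e ka; lia.
  + by move=> e; move: k'l; rewrite e jl; lia.
  + by split; apply/Sval_level => //; rewrite ?j'l ?k'l ?ka ?jl; lia.
Qed.

End SupplementaryTableau.

Theorem lemma4p9 (n : nat) (isrow : nat -> bool) (T : nat -> nat -> bool) :
  ferrers n isrow -> is_EWtab n isrow T ->
  (forall l j k, inU n isrow T l j -> colF n isrow k -> j < k ->
     (inV n isrow T l k <->
        (Sval n isrow T j k false /\ ~ cornersupport n isrow T j k false))) /\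
  (forall l j k, inV n isrow T l j -> rowF n isrow k -> k < j ->
     (inU n isrow T l.-1 k <->
        (Sval n isrow T k j true /\ ~ cornersupport n isrow T k j true))).
Proof.
move=> ferrersF EW; split=> l j k jB kF _.
- exact: inV_iff_zero_not_cornersupport.
- exact: inU_iff_one_not_cornersupport.
Qed.
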